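(* The edge set of the complete 4-partite graph $K_{4,4,4,4}$ can be partitioned into 2 subgraphs, each isomorphic to the Shrikhande graph.
   Context: The Shrikhande graph is the Cayley graph on the group $\mathbb{Z}_4 \times \mathbb{Z}_4$ with connection set $\{\pm(1,0), \pm(0,1), \pm(1,1)\}$. It is a 6-regular graph on 16 vertices with 48 edges. $K_{4,4,4,4}$ is the complete multipartite graph with four parts, each of size 4. *)

From mathcomp Require Import all_boot all_order.
Set Implicit Arguments. Unset Strict Implicit. Unset Printing Implicit Defensive.

(* Vertices of K_{4,4,4,4}: (part, index within part). *)
Definition K4444_V := ('I_4 * 'I_4)%type.
Definition K4444_adj : rel K4444_V := fun u v => u.1 != v.1.

(* Shrikhande graph: Cayley graph on Z_4 x Z_4, connection set
   {±(1,0), ±(0,1), ±(1,1)}; arithmetic mod 4 on 'I_4. *)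
Definition Shr_V := ('I_4 * 'I_4)%type.
Definition z4sub (a b : 'I_4) : nat := (a + 4 - b) %% 4.
Definition in_conn (d : nat * nat) : bool :=
  d \in [:: (1, 0); (3, 0); (0, 1); (0, 3); (1, 1); (3, 3)].
Definition shrikhande_adj : rel Shr_V :=
  fun x y => in_conn (z4sub y.1 x.1, z4sub y.2 x.2).

Definition graph_iso (T1 T2 : finType) (e1 : rel T1) (e2 : rel T2) : Prop :=
  exists f : T1 -> T2, bijective f /\ forall x y, e2 (f x) (f y) = e1 x y.

(* Identify both vertex sets with G = Z4 x Z4, sending the vertex (p, i) of
   K_{4,4,4,4} to b(p) + 2 b(i), where b(p) is the pair of binary digits of p;
   the parts then become the cosets of the 2-torsion subgroup G[2], so
   K_{4,4,4,4} is the Cayley graph of G with connection set G \ G[2].  Those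
   twelve elements split into the Shrikhande set C = ±{(1,0), (0,1), (1,1)}
   and the six remaining elements of order 4, ±{(1,2), (2,3), (3,1)}.  Since
   (1,2) + (2,3) = (3,1), the latter set is the image of C under the
   involutive automorphism phi(x, y) = (x + 2y, 2x - y), so both halves are
   Shrikhande graphs. *)

From HB Require Import structures.
From mathcomp Require Import all_boot all_order ssralg finalg zmodp.
From mathcomp Require Import ring.

Set Implicit Arguments.
Unset Strict Implicit.
Unset Printing Implicit Defensive.

Import GRing.Theory.
Local Open Scope ring_scope.

Lemma graph_iso_trans (T1 T2 T3 : finType)
    (e1 : rel T1) (e2 : rel T2) (e3 : rel T3) :
  graph_iso e1 e2 -> graph_iso e2 e3 -> graph_iso e1 e3.
Proof.
move=> [f [f_bij fE]] [g [g_bij gE]]; exists (g \o f); split.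
  exact: bij_comp.
by move=> x y; rewrite /= gE fE.
Qed.

Lemma eq_graph_iso (T : finType) (e e' : rel T) : e =2 e' -> graph_iso e e'.
Proof. by move=> ee'; exists id; split=> [|x y]; [exists id | rewrite ee']. Qed.

Lemma graph_iso_relpre (T1 T2 : finType) (f : T1 -> T2) (e : rel T2) :
  bijective f -> graph_iso e (relpre f e).
Proof.
by case=> g fK gK; exists g; split=> [|x y /=]; [exists f | rewrite !gK].
Qed.

Lemma graph_iso_symmetric (T1 T2 : finType) (e1 : rel T1) (e2 : rel T2) :
  graph_iso e1 e2 -> symmetric e1 -> symmetric e2.
Proof.
move=> [f [[g fK gK] fE]] e1_sym x y.
by rewrite -(gK x) -(gK y) !fE e1_sym.
Qed.

Section CayleyGraph.

Variable G : finZmodType.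

Definition cayley (S : pred G) : rel G := fun x y => S (y - x).

Lemma cayley_sym (S : pred G) :
  (forall s, S s -> S (- s)) -> symmetric (cayley S).
Proof. by move=> SN x y; apply/idP/idP => /SN; rewrite opprB. Qed.

Lemma cayley_iso (f g : G -> G) (S : pred G) :
  cancel f g -> cancel g f -> {morph f : x y / x - y} ->
  graph_iso (cayley S) (cayley (preim g S)).
Proof.
move=> fK gK fB; exists f; split; first exact: Bijective fK gK.
by move=> x y; rewrite /cayley /= -fB fK.
Qed.

End CayleyGraph.

(* Unlike [enum] (locked) and [ord_enum] (built with the opaque [idP]), this
   enumeration reduces under [vm_compute], which decides the finite checks. *)
Definition ord_pairs n m : seq ('I_n.+1 * 'I_m.+1) :=
  [seq (inZp i, inZp j) | i <- iota 0 n.+1, j <- iota 0 m.+1].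

Lemma ord_pairs_all n m (P : pred ('I_n.+1 * 'I_m.+1)) :
  all P (ord_pairs n m) -> forall x, P x.
Proof.
move=> /allP PP [i j]; rewrite -(valZpK i) -(valZpK j).
by apply/PP/allpairs_f; rewrite mem_iota ltn_ord.
Qed.

Lemma ord_pairs_all2 n m (e : rel ('I_n.+1 * 'I_m.+1)) :
  all (fun x => all (e x) (ord_pairs n m)) (ord_pairs n m) -> forall x y, e x y.
Proof. by move=> all_e x; apply/ord_pairs_all/(ord_pairs_all all_e). Qed.

Lemma ord_pairs_eqfun n m (T : eqType) (f g : 'I_n.+1 * 'I_m.+1 -> T) :
  all (fun x => f x == g x) (ord_pairs n m) -> f =1 g.
Proof. by move=> fg x; apply/eqP/(ord_pairs_all fg). Qed.

Lemma ord_pairs_eqrel n m (T : eqType)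
    (e e' : 'I_n.+1 * 'I_m.+1 -> 'I_n.+1 * 'I_m.+1 -> T) :
  all (fun x => all (fun y => e x y == e' x y) (ord_pairs n m))
      (ord_pairs n m) ->
  e =2 e'.
Proof. by move=> ee' x y; apply/eqP/(ord_pairs_all2 ee'). Qed.

(* The product of ['I_4] with itself has no canonical [finZmodType] join. *)
Definition Z4xZ4 : Type := 'I_4 * 'I_4.
HB.instance Definition _ := Finite.on Z4xZ4.
HB.instance Definition _ := GRing.Zmodule.on Z4xZ4.

Definition shrikhande_conn : pred Z4xZ4 :=
  mem [:: (1, 0); (-1, 0); (0, 1); (0, -1); (1, 1); (-1, -1)].

Definition phi (x : Z4xZ4) : Z4xZ4 := (x.1 + x.2 *+ 2, x.1 *+ 2 - x.2).

Definition phi_conn : pred Z4xZ4 := preim phi shrikhande_conn.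

Definition two_torsion : pred Z4xZ4 := fun z => z *+ 2 == 0.

Definition binary_digits (p : 'I_4) : Z4xZ4 := (inZp (p %/ 2), inZp (p %% 2)).

Definition part_coords (u : K4444_V) : Z4xZ4 :=
  binary_digits u.1 + binary_digits u.2 *+ 2.

Lemma shrikhande_adj_cayley : shrikhande_adj =2 cayley shrikhande_conn.
Proof. by apply: ord_pairs_eqrel; vm_compute. Qed.

Lemma shrikhande_connN s : shrikhande_conn s -> shrikhande_conn (- s).
Proof. by apply/implyP; move: s; apply: ord_pairs_all; vm_compute. Qed.

Lemma shrikhande_adj_sym : symmetric shrikhande_adj.
Proof.
by move=> x y; rewrite !shrikhande_adj_cayley (cayley_sym shrikhande_connN).
Qed.

Lemma phiK : involutive phi.
Proof. by apply: ord_pairs_eqfun; vm_compute. Qed.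

Lemma phiB : {morph phi : x y / x - y}.
Proof. by move=> [a b] [c d]; congr pair => /=; ring. Qed.

Lemma conn_partition : predC two_torsion =1 predU shrikhande_conn phi_conn.
Proof. by apply: ord_pairs_eqfun; vm_compute. Qed.

Lemma conn_disjoint z : ~~ (shrikhande_conn z && phi_conn z).
Proof. by move: z; apply: ord_pairs_all; vm_compute. Qed.

Lemma part_coords_bij : bijective part_coords.
Proof.
have pc_inj u v : (part_coords u == part_coords v) ==> (u == v).
  by move: u v; apply: ord_pairs_all2; vm_compute.
by apply: (injF_bij (T := Z4xZ4)) => u v /eqP/(implyP (pc_inj u v))/eqP.
Qed.

Lemma K4444_adj_cayley :
  K4444_adj =2 relpre part_coords (cayley (predC two_torsion)).
Proof. by apply: ord_pairs_eqrel; vm_compute. Qed.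

Theorem lemma2p2 :
  exists E1 E2 : rel K4444_V,
    [/\ symmetric E1 /\ symmetric E2,
        (forall u v, K4444_adj u v = E1 u v || E2 u v),
        (forall u v, ~~ (E1 u v && E2 u v)),
        graph_iso shrikhande_adj E1
      & graph_iso shrikhande_adj E2].
Proof.
set E1 := relpre part_coords (cayley shrikhande_conn).
set E2 := relpre part_coords (cayley phi_conn).
have iso1 : graph_iso shrikhande_adj E1.
  apply: graph_iso_trans (eq_graph_iso shrikhande_adj_cayley) _.
  exact: graph_iso_relpre part_coords_bij.
have iso2 : graph_iso shrikhande_adj E2.
  apply: graph_iso_trans (eq_graph_iso shrikhande_adj_cayley) _.
  apply: graph_iso_trans (cayley_iso _ phiK phiK phiB) _.
  exact: graph_iso_relpre part_coords_bij.
exists E1, E2; split=> //.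
- by split; apply: graph_iso_symmetric shrikhande_adj_sym.
- by move=> u v; rewrite K4444_adj_cayley; apply: conn_partition.
- by move=> u v; apply: conn_disjoint.
Qed.
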